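(* A tree $T$ is strong cop-win if and only if $T$ is a caterpillar.
   Context: A caterpillar is a tree such that removing all its leaves leaves a path (possibly empty or a single vertex). All graphs are finite and reflexive (a player may stay in place). The game of $k$ cops and $m$ robbers on $G$: in round 0 the cops first choose starting vertices, then the robbers choose theirs. In each round $i\geq 1$, all cops move (each to an adjacent vertex or staying), then all robbers move likewise. Several players may occupy the same vertex. Whenever a cop and some robbers occupy the same vertex, those robbers are captured and take no further part in the game. Both sides have full information. The cops win if all robbers are captured after finitely many rounds. For a cop-win graph $G$, $\mathrm{capt}(G,m)$ is the index of the round in which the last robber is captured when one cop plays to minimize this index and $m$ robbers play to maximize it. $G$ is strong cop-win if $\lim_{m\to\infty}\mathrm{capt}(G,m)$ exists (and is finite). *)

From mathcomp Require Import all_boot.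
Set Implicit Arguments. Unset Strict Implicit. Unset Printing Implicit Defensive.

Section Graphs.
Variables (T : finType) (e : rel T).

(* The graph is a simple graph (e symmetric, irreflexive) on the finite
   vertex type T; the game graph is its reflexive closure. *)
Definition adjr (x y : T) : bool := (x == y) || e x y.

Definition is_tree : Prop :=
  0 < #|T| /\
  (forall x y : T, connect e x y) /\
  (forall p : seq T, uniq p -> 3 <= size p -> ~~ cycle e p).

Definition deg (x : T) : nat := #|[set y | e x y]|.
Definition is_leaf (x : T) : bool := deg x == 1.

(* Removing all leaves leaves a path (possibly empty or a single vertex):
   the subgraph induced on the non-leaves is a path graph, listed by p. *)
Definition caterpillar : Prop :=
  exists p : seq T,
    [/\ uniq p,
        (forall x, (x \in p) = ~~ is_leaf x) &
        (forall x y, x \in p -> y \in p ->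
           e x y = (index y p == (index x p).+1) || (index x p == (index y p).+1))].

(* One cop against m robbers.  A robber state is an ffun 'I_m -> option T,
   None meaning captured. *)
Section Game.
Variable m : nat.
Definition rstate := {ffun 'I_m -> option T}.

Definition after_round (c' : T) (R : rstate) (M : {ffun 'I_m -> T}) : rstate :=
  [ffun i => match R i with
             | Some v => if v == c' then None
                         else if M i == c' then None else Some (M i)
             | None => None
             end].

Definition valid_rmove (c' : T) (R : rstate) (M : {ffun 'I_m -> T}) : bool :=
  [forall i, match R i with
             | Some v => (v != c') ==> adjr v (M i)
             | None => true
             end].

Definition all_captured (R : rstate) : bool := [forall i, R i == None].

Fixpoint cop_wins (k : nat) (c : T) (R : rstate) : bool :=
  match k with
  | 0 => all_captured R
  | k'.+1 => all_captured R ||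
      [exists c', adjr c c' &&
         [forall M, valid_rmove c' R M ==> cop_wins k' c' (after_round c' R M)]]
  end.

Definition initial_state (c0 : T) (R0 : {ffun 'I_m -> T}) : rstate :=
  [ffun i => if R0 i == c0 then None else Some (R0 i)].

Definition capt_le (k : nat) : bool :=
  [exists c0, [forall R0, cop_wins k c0 (initial_state c0 R0)]].

Definition capt_is (k : nat) : bool :=
  capt_le k && ((k == 0) || ~~ capt_le k.-1).
End Game.

(* lim_{m -> oo} capt(G,m) exists and is finite; for a nat-valued sequence
   this means it is eventually constant. *)
Definition strong_cop_win : Prop :=
  exists L M : nat, forall m, M <= m -> capt_is m L.

End Graphs.

From mathcomp Require Import all_boot zify.
From Stdlib Require Import Classical.
Set Implicit Arguments. Unset Strict Implicit. Unset Printing Implicit Defensive.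

(* If the non-leaves of the tree form a path s_0, ..., s_n (the spine), the cop starts at s_0 and
   keeps every robber ahead of him: at s_i he clears, in two rounds each, the leaves at s_i that
   hold robbers, and then steps to s_(i+1).  Robbers can neither slip behind him nor re-enter a
   cleared leaf, so the potential (n - i)(2|T| + 1) + 2 #(occupied leaves at s_i) drops in every
   round and all robbers are caught within a bound that does not depend on their number m.  Since
   capt(T, m) is nondecreasing in m, it is eventually constant.

   Otherwise some vertex has three non-leaf neighbours, and extending each of them by one more
   edge gives an induced spider Y with three legs of length two.  Against 7^(k+1) robbers, one for
   each sequence of target vertices in Y, the vertices of Y still occupied always contain one of
   finitely many configurations that are safe with respect to the cop's position (a closure
   property of Y checked by evaluation), so some robber survives k rounds: capt(T, m) is
   unbounded. *)

(** * Capture time and the number of robbers *)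

Lemma nondecreasing_bounded_eventually_const (f : nat -> nat) B :
  {homo f : a b / a <= b} -> (forall a, f a <= B) ->
  exists L M, forall a, M <= a -> f a = L.
Proof.
move=> f_mono; elim: B => [|B IH] f_bnd.
  by exists 0, 0 => a _; apply/eqP; rewrite -leqn0.
case: (classic (exists a, B < f a)) => [[a0 Ba0]|no_big].
  exists (f a0), a0 => a le_a0a; apply/eqP; rewrite eqn_leq (f_mono a0 a) // andbT.
  exact: leq_trans (f_bnd a) Ba0.
by apply: IH => a; rewrite leqNgt; apply/negP=> Bfa; apply: no_big; exists a.
Qed.

Section GameMonotonicity.
Variables (T : finType) (e : rel T).

Lemma cop_wins_captured m k c (R : rstate T m) : all_captured R -> cop_wins e k c R.
Proof. by case: k => [|k] /= ->. Qed.

Lemma after_round_Some m c' (R : rstate T m) M j w' :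
  valid_rmove e c' R M -> after_round c' R M j = Some w' ->
  exists w, [/\ R j = Some w, w != c', w' != c' & adjr e w w'].
Proof.
move=> /forallP/(_ j); rewrite ffunE; case: (R j) => // w.
by case: eqP => // /eqP w_c' /= adj_ww'; case: eqP => // /eqP w'_c' [<-]; exists w.
Qed.

Section Reindex.
Variables (m n : nat) (g : 'I_n -> 'I_m).
Hypothesis g_surj : forall j, exists i, g i = j.

Definition reindex (A : Type) (R : {ffun 'I_m -> A}) : {ffun 'I_n -> A} :=
  [ffun i => R (g i)].

Lemma all_captured_reindex (R : rstate T m) : all_captured (reindex R) -> all_captured R.
Proof.
move/forallP=> captured; apply/forallP=> j; have [i <-] := g_surj j.
by have := captured i; rewrite ffunE.
Qed.

(* Splitting a robber into several copies that move identically cannot help the robbers. *)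
Lemma cop_wins_reindex k c (R : rstate T m) : cop_wins e k c (reindex R) -> cop_wins e k c R.
Proof.
elim: k c R => [|k IH] c R /=; first exact: all_captured_reindex.
case/orP=> [/all_captured_reindex->//|/existsP[c' /andP[cc' /forallP win]]].
apply/orP; right; apply/existsP; exists c'; rewrite cc' /=.
apply/forallP=> M; apply/implyP=> vM; apply: IH.
have -> : reindex (after_round c' R M) = after_round c' (reindex R) (reindex M).
  by apply/ffunP=> i; rewrite !ffunE.
apply: (implyP (win (reindex M))); apply/forallP=> i; rewrite !ffunE.
exact: (forallP vM).
Qed.
End Reindex.

Lemma capt_le_mono_robbers m m' k : 0 < m -> m <= m' -> capt_le e m' k -> capt_le e m k.
Proof.
move=> m_gt0 le_mm' /existsP[c0 /forallP win]; apply/existsP; exists c0; apply/forallP=> R0.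
pose g (i : 'I_m') : 'I_m := insubd (Ordinal m_gt0) (val i).
have g_surj j : exists i, g i = j.
  exists (widen_ord le_mm' j); apply: val_inj; rewrite /g /= insubdK //; exact: ltn_ord.
apply: (cop_wins_reindex g_surj).
have -> : reindex g (initial_state c0 R0) = initial_state c0 (reindex g R0).
  by apply/ffunP=> i; rewrite !ffunE.
exact: win.
Qed.

Lemma capt_le_no_robbers (x : T) k : capt_le e 0 k.
Proof.
by apply/existsP; exists x; apply/forallP=> R0; apply: cop_wins_captured; apply/forallP=> -[].
Qed.

Lemma strong_cop_win_of_bounded (x : T) B : (forall m, capt_le e m B) -> strong_cop_win e.
Proof.
move=> capt_B.
have ex_capt m : exists k, capt_le e m k by exists B.
pose capt m := ex_minn (ex_capt m).
have captP m : capt_le e m (capt m) by rewrite /capt; case: ex_minnP.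
have capt_min m k : capt_le e m k -> capt m <= k.
  by rewrite /capt; case: ex_minnP => n _ /(_ k).
have capt_mono : {homo capt : a b / a <= b}.
  case=> [|a] b le_ab; last exact/capt_min/(capt_le_mono_robbers _ le_ab)/captP.
  by apply: leq_trans (capt_min 0 0 (capt_le_no_robbers x 0)) _.
have [L [M captL]] :=
  nondecreasing_bounded_eventually_const capt_mono (fun m => capt_min m B (capt_B m)).
exists L, M => m le_Mm; rewrite /capt_is -(captL m le_Mm) captP /=.
case: (capt m) (capt_min m) => [//|k] capt_minm /=.
by apply/negP=> /capt_minm; rewrite ltnn.
Qed.

Lemma not_strong_cop_win_of_unbounded :
  (forall k, exists2 m, 0 < m & ~~ capt_le e m k) -> ~ strong_cop_win e.
Proof.
move=> unbounded [L [M captL]]; have [m m_gt0 not_capt] := unbounded L.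
have /andP[capt_le_L _] := captL (maxn m M) (leq_maxr _ _).
by move: not_capt; rewrite (capt_le_mono_robbers m_gt0 (leq_maxl m M) capt_le_L).
Qed.
End GameMonotonicity.

(** * Trees and caterpillars *)

Section Forest.
Variables (T : finType) (e : rel T).
Hypothesis sym : symmetric e.
Hypothesis irr : irreflexive e.
Hypothesis acyc : forall p : seq T, uniq p -> 3 <= size p -> ~~ cycle e p.

Fixpoint nonbacktracking (x : T) (s : seq T) : bool :=
  if s is y :: s' then (if s' is z :: _ then x != z else true) && nonbacktracking y s'
  else true.

Lemma nonbacktracking_path_uniq x s : path e x s -> nonbacktracking x s -> uniq (x :: s).
Proof.
elim: s x => [//|y s IH] x /andP[exy pys] /andP[nb_x nb_y].
have uys := IH y pys nb_y; rewrite cons_uniq uys andbT; apply/negP=> x_in.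
have [s1 [s2 def_ys]] : exists s1 s2, y :: s = s1 ++ x :: s2.
  by case/splitPr: x_in => s1 s2; exists s1, s2.
have u_c : uniq (x :: s1).
  have /and3P[s1_uniq s1_disj _] : [&& uniq s1, ~~ has (mem s1) (x :: s2) & uniq (x :: s2)].
    by rewrite -cat_uniq -def_ys.
  by rewrite cons_uniq s1_uniq andbT; apply: contra s1_disj => x_s1; rewrite /= x_s1.
have c_c : cycle e (x :: s1).
  have : path e x (y :: s) by rewrite /= exy.
  by rewrite def_ys cat_path /= rcons_path => /and3P[-> -> _].
case: s1 def_ys u_c c_c => [[yx _]|y1 [[<- sx]|y1' s1 _ u_c c_c]].
- by move: exy; rewrite -yx irr.
- by move: nb_x; rewrite sx eqxx.
- by move: (acyc u_c isT); rewrite c_c.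
Qed.

Lemma cycle_nth x0 (c : seq T) : 0 < size c ->
  (forall k, k.+1 < size c -> e (nth x0 c k) (nth x0 c k.+1)) ->
  e (nth x0 c (size c).-1) (nth x0 c 0) -> cycle e c.
Proof.
case: c => [//|x c] _ e_next e_last; apply/(pathP x0) => k; rewrite size_rcons ltnS => k_le.
rewrite -rcons_cons !nth_rcons /= ltnS.
by case: ltngtP k_le => // [k_lt|->] _; [apply: e_next | apply: e_last].
Qed.

Lemma path_nth_edge h t i : path e h t -> i < size t -> e (nth h (h :: t) i) (nth h (h :: t) i.+1).
Proof. by move=> /(pathP h); apply. Qed.

Lemma uniq_path_no_chord h t i j : path e h t -> uniq (h :: t) ->
  i.+1 < j -> j < size (h :: t) -> e (nth h (h :: t) i) (nth h (h :: t) j) = false.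
Proof.
set p := h :: t => p_path p_uniq lt_ij j_lt; apply/negP => chord.
pose c := [seq nth h p k | k <- iota i (j - i).+1].
have size_c : size c = (j - i).+1 by rewrite size_map size_iota.
have nth_c k : k < size c -> nth h c k = nth h p (i + k).
  by rewrite size_c => k_lt; rewrite (nth_map 0) ?size_iota // nth_iota.
have c_uniq : uniq c.
  have ij_eq : i + (j - i).+1 = j.+1 by lia.
  rewrite map_inj_in_uniq ?iota_uniq // => k1 k2.
  rewrite !mem_iota ij_eq => /andP[_ k1_lt] /andP[_ k2_lt].
  move/eqP; rewrite nth_uniq //; first by move/eqP.
    exact: leq_trans k1_lt j_lt.
  exact: leq_trans k2_lt j_lt.
have : cycle e c.
  apply: (@cycle_nth h c); first by rewrite size_c.
    move=> k k_lt; rewrite !nth_c ?(ltnW k_lt) // addnS; apply: path_nth_edge => //.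
    by move: k_lt j_lt; rewrite size_c /p /=; lia.
  by rewrite !nth_c ?size_c // addn0 sym (_ : i + _ = j) //; lia.
by apply/negP/acyc; rewrite // size_c; lia.
Qed.

Lemma uniq_path_nth_edgeE h t i j : path e h t -> uniq (h :: t) ->
  i < size (h :: t) -> j < size (h :: t) ->
  e (nth h (h :: t) i) (nth h (h :: t) j) = (j == i.+1) || (i == j.+1).
Proof.
move=> p_path p_uniq i_lt j_lt.
case: (ltngtP i j) => [lt_ij|lt_ji|<-]; last by rewrite irr (ltn_eqF (ltnSn i)).
- rewrite (_ : i == j.+1 = false) ?orbF; last by lia.
  case: eqP => [ji|/eqP ne]; first by subst j; apply: path_nth_edge.
  by rewrite uniq_path_no_chord // ltn_neqAle eq_sym ne.
- rewrite (_ : j == i.+1 = false) //=; last by lia.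
  case: eqP => [ij|/eqP ne]; first by subst i; rewrite sym; apply: path_nth_edge.
  by rewrite sym uniq_path_no_chord // ltn_neqAle eq_sym ne.
Qed.

Hypothesis conn : forall x y : T, connect e x y.

Notation nonleaf x := (~~ is_leaf e x).

Lemma nonleaf_of_two_neighbours x y z : e x y -> e x z -> y != z -> nonleaf x.
Proof.
move=> exy exz neq_yz; rewrite /is_leaf /deg; apply/negP => /eqP deg1.
have : #|[set y; z]| <= #|[set u | e x u]|.
  by apply: subset_leq_card; apply/subsetP=> u; rewrite !inE => /orP[]/eqP->.
by rewrite cards2 neq_yz deg1.
Qed.

Lemma nonleaf_other_neighbour x u : e x u -> nonleaf x -> exists2 y, e x y & y != u.
Proof.
move=> exu; case: (boolP [exists y, e x y && (y != u)]) => [/existsP[y /andP[]]|].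
  by exists y.
move/existsPn=> no_other; rewrite /is_leaf /deg.
have -> : [set y | e x y] = [set u].
  apply/setP => y; rewrite !inE; apply/idP/eqP => [exy|->//].
  by apply/eqP; move: (no_other y); rewrite exy negbK.
by rewrite cards1.
Qed.

Definition no_fork := forall u a b c, e u a -> e u b -> e u c -> uniq [:: a; b; c] ->
  nonleaf a -> nonleaf b -> nonleaf c -> False.

Definition nonleaf_path (h : T) (t : seq T) :=
  [&& uniq (h :: t), all (fun x => nonleaf x) (h :: t) & path e h t].

Definition extendable_at (p : seq T) (x : T) :=
  [exists w, [&& w \notin p, nonleaf w & e x w]].

Lemma maximal_nonleaf_path h t : nonleaf_path h t ->
  exists h' t', [&& nonleaf_path h' t', ~~ extendable_at (h' :: t') h'
                  & ~~ extendable_at (h' :: t') (last h' t')].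
Proof.
move: {2}(#|T| - size t) (leqnn (#|T| - size t)) => n.
elim: n h t => [|n IH] h t size_t /and3P[p_uniq p_nonleaf p_path];
  have p_size : size (h :: t) <= #|T| by rewrite -(card_uniqP p_uniq) max_card.
- by move: size_t p_size => /=; lia.
case: (boolP (extendable_at (h :: t) h)) => [/existsP[w /and3P[w_notin w_nonleaf ehw]]|no_front].
  apply: (IH w (h :: t)); first by move: size_t p_size => /=; lia.
  apply/and3P; split=> //; first by rewrite cons_uniq w_notin.
    by rewrite /= w_nonleaf.
  by rewrite /= sym ehw.
case: (boolP (extendable_at (h :: t) (last h t))) =>
    [/existsP[w /and3P[w_notin w_nonleaf elw]]|no_back].
  apply: (IH h (rcons t w)); first by move: size_t p_size; rewrite size_rcons /=; lia.
  apply/and3P; split; first by rewrite -rcons_cons rcons_uniq w_notin.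
    by rewrite -rcons_cons all_rcons w_nonleaf.
  by rewrite rcons_path p_path elw.
by exists h, t; rewrite no_front no_back /nonleaf_path p_uniq p_nonleaf p_path.
Qed.

Lemma path_exit_edge (p : seq T) q h : path e h q -> uniq (h :: q) -> h \in p ->
  nonleaf (last h q) -> last h q \notin p ->
  exists u w, [/\ u \in p, w \notin p, nonleaf w & e u w].
Proof.
elim: q h => [|w q IH] h /=; first by move=> _ _ ->.
case/andP=> ehw q_path /andP[h_notin q_uniq] h_in last_nonleaf last_notin.
case: (boolP (w \in p)) => w_in; first exact: (IH w q_path q_uniq w_in).
exists h, w; split=> //.
case: q {IH} q_path h_notin q_uniq last_nonleaf last_notin => [//|z q] /=.
move=> /andP[ewz _] h_notin _ _ _.
apply: (nonleaf_of_two_neighbours (y := h) (z := z)) => //; first by rewrite sym.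
by apply: contraNneq h_notin => ->; rewrite !inE eqxx orbT.
Qed.

(* A walk from [h] to a non-leaf [x] off the path leaves the path at some [u] towards a non-leaf;
   by maximality [u] is an inner vertex, so with its two path neighbours this is a fork. *)
Lemma maximal_nonleaf_path_covers h t : nonleaf_path h t ->
  ~~ extendable_at (h :: t) h -> ~~ extendable_at (h :: t) (last h t) -> no_fork ->
  forall x, nonleaf x -> x \in h :: t.
Proof.
set p := h :: t => /and3P[p_uniq p_nonleaf p_path] no_front no_back no_fork_e x x_nonleaf.
apply/negPn/negP => x_notin.
have /connectP[q hq_path x_last] := conn h x; subst x.
case/shortenP: hq_path x_nonleaf x_notin => q' q'_path q'_uniq _ x_nonleaf x_notin.
have [u [w [u_in w_notin w_nonleaf euw]]] :=
  path_exit_edge q'_path q'_uniq (mem_head h t) x_nonleaf x_notin.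
have nth_u : nth h p (index u p) = u by rewrite nth_index.
have u_idx : index u p < size p by rewrite index_mem.
case idx_u : (index u p) => [|k] in nth_u u_idx.
  by case/existsP: no_front; exists w; rewrite w_notin w_nonleaf; rewrite -nth_u in euw.
case: (ltnP k.+1 (size t)) => k_lt; last first.
  have k_eq : k.+1 = size t by apply/anti_leq; rewrite k_lt andbT -ltnS.
  have u_last : last h t = u by rewrite -nth_u k_eq -[size t]/((size (h :: t)).-1) nth_last.
  by case/existsP: no_back; exists w; rewrite w_notin w_nonleaf u_last.
have k2_lt : k.+2 < size p := k_lt.
have k_lt' : k < size p by apply: ltn_trans k2_lt; apply: leqW.
have e_prev : e u (nth h p k) by rewrite -nth_u sym; apply: path_nth_edge (ltnW k_lt).
have e_next : e u (nth h p k.+2) by rewrite -nth_u; apply: path_nth_edge.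
have in_p i : i < size p -> nth h p i \in p by apply: mem_nth.
have neq_w i : i < size p -> nth h p i != w.
  by move=> i_lt; apply: contraNneq w_notin => <-; apply: in_p.
have neq_nth : nth h p k != nth h p k.+2 by rewrite nth_uniq // ltn_eqF // leqW.
apply: (no_fork_e u _ _ w e_prev e_next euw) => //.
- have := neq_w _ k2_lt; have := neq_w _ k_lt'.
  by rewrite /= !inE negb_or neq_nth => -> ->.
- by apply: (allP p_nonleaf); apply: in_p.
- by apply: (allP p_nonleaf); apply: in_p.
Qed.

Lemma caterpillar_of_no_fork : no_fork -> caterpillar e.
Proof.
move=> no_fork_e.
case: (boolP [exists x, nonleaf x]) => [/existsP[x0 x0_nonleaf]|/existsPn all_leaves]; last first.
  by exists [::]; split=> // x; rewrite in_nil; move: (all_leaves x); rewrite negbK => ->.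
have [|h [t /and3P[p_ok no_front no_back]]] := @maximal_nonleaf_path x0 [::].
  by rewrite /nonleaf_path /= x0_nonleaf.
have /and3P[p_uniq p_nonleaf p_path] := p_ok.
exists (h :: t); split=> // [x|x y x_in y_in].
  by apply/idP/idP => [/(allP p_nonleaf)|]; last exact: maximal_nonleaf_path_covers.
rewrite -{1}(nth_index h x_in) -{1}(nth_index h y_in).
by rewrite uniq_path_nth_edgeE ?index_mem.
Qed.
End Forest.

Section Leaves.
Variables (T : finType) (e : rel T).
Hypothesis sym : symmetric e.
Hypothesis conn : forall x y : T, connect e x y.

Lemma leaf_neighbour_uniq w u u' : is_leaf e w -> e w u -> e w u' -> u' = u.
Proof.
rewrite /is_leaf /deg => /cards1P[z nbrs] ewu ewu'.
have : u \in [set y | e w y] by rewrite inE.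
have : u' \in [set y | e w y] by rewrite inE.
by rewrite nbrs !inE => /eqP -> /eqP ->.
Qed.

Lemma leaf_neighbour w : is_leaf e w -> exists u, e w u.
Proof.
rewrite /is_leaf /deg => /eqP deg1; have : 0 < #|[set y | e w y]| by rewrite deg1.
by case/card_gt0P => u; rewrite inE; exists u.
Qed.

Lemma adjacent_leaves_cover w u : e w u -> is_leaf e w -> is_leaf e u ->
  forall x, (x == w) || (x == u).
Proof.
move=> ewu leaf_w leaf_u x.
have closed_wu : closed e (pred2 w u).
  have step y z : e y z -> (y == w) || (y == u) -> (z == w) || (z == u).
    move=> eyz /orP[]/eqP y_eq; subst y.
      by rewrite (leaf_neighbour_uniq leaf_w ewu eyz) eqxx orbT.
    by rewrite sym in ewu; rewrite (leaf_neighbour_uniq leaf_u ewu eyz) eqxx.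
  by move=> y z eyz; apply/idP/idP; apply: step; rewrite // sym.
by rewrite -[_ || _]/(x \in pred2 w u) -(closed_connect closed_wu (conn w x)) inE eqxx.
Qed.
End Leaves.

(** * The cop on a caterpillar *)

Section CaterpillarCop.
Variables (T : finType) (e : rel T) (x0 : T) (s : seq T) (pos : T -> nat).
Hypothesis sym : symmetric e.
Local Notation spine i := (nth x0 s i).
Hypothesis pos_lt : forall w, pos w < size s.
Hypothesis pos_spine : forall i, i < size s -> pos (spine i) = i.
Hypothesis spine_pos : forall w, w \in s -> spine (pos w) = w.
Hypothesis leaf_attached : forall w, w \notin s ->
  e w (spine (pos w)) /\ (forall u, e w u -> u = spine (pos w)).
Hypothesis edge_down : forall u w, e u w -> pos w < pos u -> u \in s /\ w = spine (pos u).-1.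
Hypothesis spine_path : forall i, i.+1 < size s -> e (spine i) (spine i.+1).

Lemma pos_no_retreat i w w' : i <= pos w -> w != spine i -> adjr e w w' -> i <= pos w'.
Proof.
move=> i_le w_i /orP[/eqP <-//|eww']; rewrite leqNgt; apply/negP => w'_lt.
have [w_in w'_eq] := edge_down eww' (leq_trans w'_lt i_le).
have pos_w' : pos w' = (pos w).-1.
  by rewrite w'_eq pos_spine // (leq_ltn_trans (leq_pred _) (pos_lt w)).
have : pos w != i by apply: contra w_i => /eqP <-; rewrite spine_pos.
by move: w'_lt i_le; rewrite pos_w'; lia.
Qed.

Lemma leaf_entered_from_spine w w' : w' \notin s -> adjr e w w' -> w != spine (pos w') -> w = w'.
Proof.
move=> w'_notin /orP[/eqP//|eww'] w_spine; have [_ nbr] := leaf_attached w'_notin.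
by move: w_spine; rewrite (nbr w) ?eqxx // sym.
Qed.

Variable m : nat.
Implicit Types R : rstate T m.

Definition ahead i R := forall j w, R j = Some w -> i <= pos w /\ w != spine i.

Definition occupied_leaves i R : {set T} :=
  [set w | [&& w \notin s, pos w == i & [exists j, R j == Some w]]].

Definition potential i R := (size s - i.+1) * (2 * #|T| + 1) + 2 * #|occupied_leaves i R|.

Lemma occupied_leavesP i R j w : ahead i R -> R j = Some w -> pos w = i ->
  w \in occupied_leaves i R.
Proof.
move=> ahead_R R_j pos_w; have [_ w_i] := ahead_R j w R_j.
have w_notin : w \notin s by apply: contra w_i => w_in; rewrite -pos_w spine_pos.
by rewrite inE w_notin pos_w eqxx /=; apply/existsP; exists j; rewrite R_j.
Qed.

Lemma ahead_end_captured i R : ahead i R -> occupied_leaves i R = set0 -> size s <= i.+1 ->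
  all_captured R.
Proof.
move=> ahead_R no_leaves s_le; apply/forallP => j; case R_j: (R j) => [w|//].
have [i_le _] := ahead_R j w R_j.
have pos_w : pos w = i by apply/eqP; rewrite eqn_leq i_le -ltnS (leq_trans (pos_lt w) s_le).
by have := occupied_leavesP ahead_R R_j pos_w; rewrite no_leaves inE.
Qed.

Lemma ahead_advance i R M : ahead i R -> occupied_leaves i R = set0 ->
  valid_rmove e (spine i.+1) R M -> ahead i.+1 (after_round (spine i.+1) R M).
Proof.
move=> ahead_R no_leaves valid_M j w' /(after_round_Some valid_M) [w [R_j w_next w'_next ww']].
split=> //; have [i_le w_i] := ahead_R j w R_j.
have pos_w : pos w != i.
  by apply/eqP=> pos_w; have := occupied_leavesP ahead_R R_j pos_w; rewrite no_leaves inE.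
by apply: pos_no_retreat w_next ww'; rewrite ltn_neqAle eq_sym pos_w.
Qed.

Section Sweep.
Variables (i : nat) (l : T) (R : rstate T m) (M M' : {ffun 'I_m -> T}).
Hypothesis ahead_R : ahead i R.
Hypothesis valid_M : valid_rmove e l R M.
Hypothesis valid_M' : valid_rmove e (spine i) (after_round l R M) M'.
Let R2 := after_round (spine i) (after_round l R M) M'.

Lemma sweep_trace j w2 : R2 j = Some w2 -> exists w,
  [/\ R j = Some w, w != l, i <= pos w2, w2 != spine i & (w2 \notin s -> pos w2 = i -> w = w2)].
Proof.
move=> /(after_round_Some valid_M') [w1 [R1_j w1_i w2_i w12]].
have [w [R_j w_l w1_l ww1]] := after_round_Some valid_M R1_j.
have [i_le w_spine] := ahead_R R_j.
have i_le1 := pos_no_retreat i_le w_spine ww1.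
exists w; split=> //; first exact: pos_no_retreat i_le1 w1_i w12.
move=> w2_notin pos_w2.
have w12_eq : w1 = w2 by apply: leaf_entered_from_spine; rewrite ?pos_w2.
by subst w1; apply: leaf_entered_from_spine; rewrite ?pos_w2.
Qed.

Lemma sweep_ahead : ahead i R2.
Proof. by move=> j w2 /sweep_trace [w [_ _ ? ? _]]. Qed.

Lemma sweep_occupied_leaves : occupied_leaves i R2 \subset occupied_leaves i R :\ l.
Proof.
apply/subsetP => w; rewrite !inE => /and3P[w_notin /eqP pos_w /existsP[j /eqP R2_j]].
have [w0 [R_j w0_l _ _ w0_eq]] := sweep_trace R2_j.
have w0_w := w0_eq w_notin pos_w; subst w0.
rewrite w0_l w_notin pos_w eqxx /=.
by apply/existsP; exists j; rewrite R_j.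
Qed.
End Sweep.

(* Every round either moves the cop one step along the spine or, in two rounds, empties a leaf at
   the cop's spine vertex; robbers cannot re-enter those leaves, so [potential] decreases. *)
Lemma cop_wins_potential k i R : i < size s -> ahead i R -> potential i R <= k ->
  cop_wins e k (spine i) R.
Proof.
elim/ltn_ind: k i R => k IH i R i_lt ahead_R pot_k.
case: (set_0Vmem (occupied_leaves i R)) => [no_leaves|[l l_leaf]].
  case: (ltnP i.+1 (size s)) => i_next; last exact/cop_wins_captured/(ahead_end_captured ahead_R).
  have card0 : #|occupied_leaves i R| = 0 by rewrite no_leaves cards0.
  case: k pot_k IH => [|k] pot_k IH; first by move: pot_k i_next; rewrite /potential card0; nia.
  rewrite /=; apply/orP; right; apply/existsP; exists (spine i.+1).
  rewrite /adjr spine_path // orbT /=; apply/forallP => M; apply/implyP => valid_M.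
  apply: (IH k (ltnSn k) i.+1 _ i_next (ahead_advance ahead_R no_leaves valid_M)).
  have := max_card (occupied_leaves i.+1 (after_round (spine i.+1) R M)).
  move: pot_k i_next; rewrite /potential card0; nia.
move: (l_leaf); rewrite inE => /and3P[l_notin /eqP pos_l _].
have [e_l _] := leaf_attached l_notin; rewrite pos_l in e_l.
have card_pos : 0 < #|occupied_leaves i R| by apply/card_gt0P; exists l.
case: k pot_k IH => [|[|k]] pot_k IH; try by move: pot_k card_pos; rewrite /potential; nia.
rewrite /=; apply/orP; right; apply/existsP; exists l.
rewrite /adjr sym e_l orbT /=; apply/forallP => M; apply/implyP => valid_M.
apply/orP; right; apply/existsP; exists (spine i).
rewrite /adjr e_l orbT /=; apply/forallP => M'; apply/implyP => valid_M'.
apply: (IH k (leqW (ltnSn k)) i _ i_lt (sweep_ahead ahead_R valid_M valid_M')).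
have := subset_leq_card (sweep_occupied_leaves ahead_R valid_M valid_M').
have := cardsD1 l (occupied_leaves i R); rewrite l_leaf.
by move: pot_k; rewrite /potential; lia.
Qed.

Lemma caterpillar_capt_le : 0 < size s -> capt_le e m ((size s).-1 * (2 * #|T| + 1) + 2 * #|T|).
Proof.
move=> s_gt0; apply/existsP; exists (spine 0); apply/forallP => R0.
apply: cop_wins_potential => //.
- by move=> j w; rewrite ffunE; case: eqP => // /eqP w_0 [<-]; split.
- have := max_card (occupied_leaves 0 (initial_state (spine 0) R0)).
  by rewrite /potential subn1; lia.
Qed.
End CaterpillarCop.

Section Spine.
Variables (T : finType) (e : rel T) (x0 : T) (s : seq T).
Hypothesis sym : symmetric e.
Hypothesis s_gt0 : 0 < size s.
Hypothesis s_uniq : uniq s.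
Hypothesis s_edges : forall x y, x \in s -> y \in s ->
  e x y = (index y s == (index x s).+1) || (index x s == (index y s).+1).
Hypothesis off_spine_leaf : forall w, w \notin s -> is_leaf e w.
Hypothesis off_spine_neighbour : forall w u, w \notin s -> e w u -> u \in s.

Let nbr (w : T) : T := odflt w [pick u | e w u].

Lemma nbrP w : w \notin s -> e w (nbr w) /\ nbr w \in s.
Proof.
move=> w_notin; rewrite /nbr; case: pickP => [u ewu|no_nbr].
  by split; last exact: off_spine_neighbour ewu.
by have [u ewu] := leaf_neighbour (off_spine_leaf w_notin); move: (no_nbr u); rewrite ewu.
Qed.

Let pos (w : T) : nat := if w \in s then index w s else index (nbr w) s.

Lemma spine_capt_bounded m : capt_le e m ((size s).-1 * (2 * #|T| + 1) + 2 * #|T|).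
Proof.
have leaf_nbr w u : w \notin s -> e w u -> u = nbr w.
  by move=> w_notin ewu; apply: leaf_neighbour_uniq (off_spine_leaf w_notin) (nbrP w_notin).1 ewu.
apply: (@caterpillar_capt_le T e x0 s pos sym) => //.
- by move=> w; rewrite /pos; case: ifP => w_in; rewrite index_mem // (nbrP (negbT w_in)).2.
- by move=> i i_lt; rewrite /pos mem_nth // index_uniq.
- by move=> w w_in; rewrite /pos w_in nth_index.
- move=> w w_notin; rewrite /pos (negbTE w_notin) nth_index; last exact: (nbrP w_notin).2.
  by split=> [|u]; [exact: (nbrP w_notin).1 | exact: leaf_nbr].
- move=> u w euw; rewrite /pos.
  case: (boolP (u \in s)) => u_in; case: (boolP (w \in s)) => w_in.
  + rewrite s_edges // in euw => lt_wu; split=> //.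
    case/orP: euw => /eqP idx; first by move: lt_wu; rewrite idx ltnNge leqnSn.
    by rewrite idx /= nth_index.
  + by rewrite -(leaf_nbr w u) ?ltnn // sym.
  + by rewrite -(leaf_nbr u w) ?ltnn.
  + by move: w_in; rewrite (leaf_nbr u w) // (nbrP u_in).2.
- by move=> i i_lt; rewrite s_edges ?mem_nth // ?index_uniq // ?eqxx //; apply: ltnW.
Qed.
End Spine.

(** * Robbers on a spider *)

Definition spider_edges : seq (nat * nat) := [:: (0, 1); (0, 2); (0, 3); (1, 4); (2, 5); (3, 6)].

Definition spider_adj (i j : nat) : bool :=
  [|| i == j, (i, j) \in spider_edges | (j, i) \in spider_edges].

Definition spider_legs : seq (seq nat) :=
  [:: [:: 4; 1; 0; 2; 5]; [:: 4; 1; 0; 3; 6]; [:: 5; 2; 0; 3; 6]].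

Lemma spider_legs_cover i j : i < 7 -> j < 7 ->
  exists2 L, L \in spider_legs & (i \in L) && (j \in L).
Proof.
have cover : all (fun i => all (fun j => has (fun L => (i \in L) && (j \in L)) spider_legs)
                                 (iota 0 7)) (iota 0 7) by [].
move=> i_lt j_lt; have := allP cover i; rewrite mem_iota i_lt => /(_ isT) /allP/(_ j).
by rewrite mem_iota j_lt => /(_ isT) /hasP[L]; exists L.
Qed.

Lemma spider_adj_legs : all (fun L => all (fun i => all (fun j =>
  spider_adj i j ==
    (i == j) || ((index j L == (index i L).+1) || (index i L == (index j L).+1))) L) L)
  spider_legs.
Proof. by []. Qed.

Section SpiderEmbedding.
Variables (T : finType) (e : rel T).
Hypothesis sym : symmetric e.
Hypothesis irr : irreflexive e.
Hypothesis acyc : forall p : seq T, uniq p -> 3 <= size p -> ~~ cycle e p.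

Variables (o a b c a' b' c' : T).
Hypotheses (eoa : e o a) (eob : e o b) (eoc : e o c) (eaa : e a a') (ebb : e b b') (ecc : e c c').
Hypotheses (abc_uniq : uniq [:: a; b; c]) (a'_o : a' != o) (b'_o : b' != o) (c'_o : c' != o).

Definition spider_vertex (j : nat) : T := nth o [:: o; a; b; c; a'; b'; c'] j.

Lemma spider_leg_path x1 x2 y1 y2 : e o x1 -> e o y1 -> e x1 x2 -> e y1 y2 ->
  x1 != y1 -> x2 != o -> y2 != o -> path e x2 [:: x1; o; y1; y2] /\ uniq [:: x2; x1; o; y1; y2].
Proof.
move=> eox1 eoy1 ex12 ey12 x1_y1 x2_o y2_o.
have leg_path : path e x2 [:: x1; o; y1; y2] by rewrite /= (sym x2) ex12 (sym x1) eox1 eoy1 ey12.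
split=> //; apply: nonbacktracking_path_uniq => //.
by rewrite /= x2_o x1_y1 eq_sym y2_o.
Qed.

Lemma spider_vertex_induced i j : i < 7 -> j < 7 ->
  (spider_vertex i == spider_vertex j) = (i == j) /\
  adjr e (spider_vertex i) (spider_vertex j) = spider_adj i j.
Proof.
move=> i_lt j_lt; have [L L_in /andP[iL jL]] := spider_legs_cover i_lt j_lt.
have [x [s [def_q q_path q_uniq]]] : exists x s,
    [/\ map spider_vertex L = x :: s, path e x s & uniq (x :: s)].
  move: abc_uniq; rewrite /= !inE !negb_or => /andP[/andP[ab ac] /andP[bc _]].
  move: L_in; rewrite !inE => /or3P[] /eqP-> /=.
  - have [? ?] := spider_leg_path eoa eob eaa ebb ab a'_o b'_o.
    by exists a', [:: a; o; b; b'].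
  - have [? ?] := spider_leg_path eoa eoc eaa ecc ac a'_o c'_o.
    by exists a', [:: a; o; c; c'].
  - have [? ?] := spider_leg_path eob eoc ebb ecc bc b'_o c'_o.
    by exists b', [:: b; o; c; c'].
have size_q : size (x :: s) = size L by rewrite -def_q size_map.
have vertex_nth k : k \in L -> spider_vertex k = nth x (x :: s) (index k L).
  by move=> kL; rewrite -def_q (nth_map 0) ?index_mem // nth_index.
have vertex_eq : (spider_vertex i == spider_vertex j) = (i == j).
  rewrite !vertex_nth // nth_uniq ?size_q ?index_mem //.
  by apply/eqP/eqP => [/(index_inj 0 iL jL)|->].
split=> //; rewrite /adjr vertex_eq !vertex_nth // uniq_path_nth_edgeE ?size_q ?index_mem //.
by have /allP/(_ i iL)/allP/(_ j jL)/eqP-> := allP spider_adj_legs L L_in.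
Qed.
End SpiderEmbedding.

(* Position [7] stands for every vertex off the spider; moves from or to it are unconstrained. *)
Definition cop_moves (s t : nat) : bool := if (s < 7) && (t < 7) then spider_adj s t else true.

Definition occupied (W : seq bool) (j : nat) : bool := nth false W j.

Definition spread (t : nat) (W : seq bool) : seq bool :=
  [seq (t != j) && has (fun i => [&& occupied W i, t != i & spider_adj i j]) (iota 0 7)
  | j <- iota 0 7].

(* The list is a certificate: [safe_configs_closed] checks by evaluation that safety
   survives any cop move followed by the robbers spreading to the neighbours of their vertices. *)
Definition safe_configs : seq (nat * seq nat) :=
 [:: (0, [:: 1;2;4;5]); (0, [:: 1;3;4;6]); (0, [:: 2;3;5;6]);
     (1, [:: 0;2;3;5;6]); (1, [:: 0;2;4;5]); (1, [:: 0;3;4;6]);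
     (2, [:: 0;1;3;4;6]); (2, [:: 0;1;4;5]); (2, [:: 0;3;5;6]);
     (3, [:: 0;1;2;4;5]); (3, [:: 0;1;4;6]); (3, [:: 0;2;5;6]);
     (4, [:: 0;1;2;3;5]); (4, [:: 0;1;2;3;6]);
     (5, [:: 0;1;2;3;4]); (5, [:: 0;1;2;3;6]);
     (6, [:: 0;1;2;3;4]); (6, [:: 0;1;2;3;5]);
     (7, [:: 0;1;2;4;5]); (7, [:: 0;1;3;4;6]); (7, [:: 0;2;3;5;6])].

Definition safe (s : nat) (W : seq bool) : bool :=
  has (fun C => (C.1 == s) && all (occupied W) C.2) safe_configs.

Definition occupancy (C : seq nat) : seq bool := [seq j \in C | j <- iota 0 7].

Lemma safe_configs_closed : all (fun C => all (fun t =>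
  cop_moves C.1 t ==> safe t (spread t (occupancy C.2))) (iota 0 8)) safe_configs.
Proof. by vm_compute. Qed.

Lemma safe_configs_in_spider :
  all (fun C => all (fun j => j < 7) C.2 && (0 < size C.2)) safe_configs.
Proof. by vm_compute. Qed.

Lemma safe_initial : all (fun s => safe s [seq s != j | j <- iota 0 7]) (iota 0 8).
Proof. by vm_compute. Qed.

Lemma occupied_map (f : nat -> bool) j : j < 7 -> occupied [seq f i | i <- iota 0 7] j = f j.
Proof. by move=> j_lt; rewrite /occupied (nth_map 0) ?size_iota // nth_iota. Qed.

Definition sub_occupancy (W W' : seq bool) := forall j, j < 7 -> occupied W j -> occupied W' j.

Lemma safe_sub s W W' : sub_occupancy W W' -> safe s W -> safe s W'.
Proof.
move=> sub_WW' /hasP[C C_in /andP[C_s /allP C_occ]]; apply/hasP; exists C => //; rewrite C_s /=.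
have /andP[/allP C_spider _] := allP safe_configs_in_spider C C_in.
by apply/allP=> j jC; apply: sub_WW'; [apply: C_spider | apply: C_occ].
Qed.

Lemma spread_sub t W W' : sub_occupancy W W' -> sub_occupancy (spread t W) (spread t W').
Proof.
move=> sub_WW' j j_lt; rewrite /spread !occupied_map // => /andP[-> /hasP[i i_in occ_i]].
apply/hasP; exists i => //; case/and3P: occ_i => W_i -> ->; rewrite sub_WW' //.
by move: i_in; rewrite mem_iota.
Qed.

Lemma safe_spread s t W : safe s W -> cop_moves s t -> t < 8 -> safe t (spread t W).
Proof.
move=> /hasP[C C_in /andP[/eqP C_s /allP C_occ]] st t_lt.
have := allP safe_configs_closed C C_in => /allP/(_ t); rewrite mem_iota t_lt C_s st => /(_ isT).
apply/safe_sub/spread_sub => j j_lt; rewrite occupied_map //; exact: C_occ.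
Qed.

Lemma safe_occupied s W : safe s W -> exists2 j, j < 7 & occupied W j.
Proof.
move=> /hasP[[s' [|j C]] C_in /andP[_ /allP C_occ]].
  by have := allP safe_configs_in_spider _ C_in; rewrite andbF.
have /andP[/allP C_spider _] := allP safe_configs_in_spider _ C_in.
by exists j; [apply: C_spider | apply: C_occ]; rewrite mem_head.
Qed.

Section SpiderRobbers.
Variables (T : finType) (e : rel T) (v : nat -> T).
Hypothesis v_inj : forall i j, i < 7 -> j < 7 -> (v i == v j) = (i == j).
Hypothesis v_adj : forall i j, i < 7 -> j < 7 -> adjr e (v i) (v j) = spider_adj i j.

Definition spider_pos (c : T) : nat := if [pick j : 'I_7 | v j == c] is Some j then val j else 7.

Lemma spider_pos_lt c : spider_pos c < 8.
Proof. by rewrite /spider_pos; case: pickP => // j _; apply: ltn_trans (ltn_ord j) _. Qed.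

Lemma spider_posE c j : j < 7 -> (spider_pos c == j) = (v j == c).
Proof.
move=> j_lt; rewrite /spider_pos; case: pickP => [i /eqP <-|no_pick].
  by rewrite v_inj // eq_sym.
by have := no_pick (Ordinal j_lt) => /= ->; rewrite gtn_eqF.
Qed.

Lemma cop_moves_spider_pos c c' : adjr e c c' -> cop_moves (spider_pos c) (spider_pos c').
Proof.
rewrite /cop_moves; case: ifP => // /andP[c_lt c'_lt]; rewrite -v_adj //.
move: (eqxx (spider_pos c)) (eqxx (spider_pos c')).
by rewrite {1}spider_posE // {1}spider_posE // => /eqP-> /eqP->.
Qed.

Variable n : nat.
(* Robber [i] follows its own plan of n + 1 spider vertices: in round t + 1 it steps to
   [plan i (t + 1)] when that vertex is adjacent, and waits otherwise. *)
Definition plans := {ffun 'I_n.+1 -> 'I_7}.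
Definition num_robbers := #|plans|.
Definition plan (i : 'I_num_robbers) : plans := enum_val i.

Definition robbers_inv t W (R : rstate T num_robbers) :=
  forall j, j < 7 -> occupied W j -> exists f : plans,
    forall i, (forall s : 'I_n.+1, s <= t -> plan i s = f s) -> R i = Some (v j).

Definition robbers_move t (c' : T) (R : rstate T num_robbers) : {ffun 'I_num_robbers -> T} :=
  [ffun i => if R i is Some w then
               (let y := v (plan i (inord t.+1)) in if adjr e w y then y else w)
             else c'].

Lemma robbers_move_valid t c' R : valid_rmove e c' R (robbers_move t c' R).
Proof.
apply/forallP=> i; rewrite ffunE; case: (R i) => // w; apply/implyP=> _ /=.
by case: ifP => // _; rewrite /adjr eqxx.
Qed.

Lemma robbers_inv_step t W R c' : t.+1 < n.+1 -> robbers_inv t W R ->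
  robbers_inv t.+1 (spread (spider_pos c') W) (after_round c' R (robbers_move t c' R)).
Proof.
move=> t_lt inv_R j j_lt; rewrite /spread occupied_map //.
case/andP=> c'_j /hasP[i0 i0_in /and3P[W_i0 c'_i0 adj_i0j]].
have i0_lt : i0 < 7 by move: i0_in; rewrite mem_iota.
have [f0 plan_f0] := inv_R i0 i0_lt W_i0.
exists [ffun s : 'I_n.+1 => if val s == t.+1 then Ordinal j_lt else f0 s] => i plan_i.
have R_i : R i = Some (v i0).
  apply: plan_f0 => s s_le; have := plan_i s (leqW s_le); rewrite ffunE.
  by rewrite (ltn_eqF (leq_ltn_trans s_le (ltnSn t))).
have plan_next : val (plan i (inord t.+1)) = j.
  have val_next : nat_of_ord (inord t.+1 : 'I_n.+1) = t.+1 by rewrite inordK.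
  by rewrite plan_i ?val_next // ffunE /= val_next eqxx.
rewrite !ffunE R_i /= plan_next v_adj // adj_i0j -(spider_posE c' i0_lt) (negbTE c'_i0).
by rewrite -(spider_posE c' j_lt) (negbTE c'_j).
Qed.

Lemma robbers_inv_alive t W R s : robbers_inv t W R -> safe s W -> ~~ all_captured R.
Proof.
move=> inv_R /safe_occupied[j j_lt W_j]; have [f plan_f] := inv_R j j_lt W_j.
apply/forallPn; exists (enum_rank f); rewrite plan_f // => s0 _.
by rewrite /plan enum_rankK.
Qed.

Lemma robbers_survive k t c W R : t + k < n.+1 -> safe (spider_pos c) W -> robbers_inv t W R ->
  ~~ cop_wins e k c R.
Proof.
elim: k t c W R => [|k IH] t c W R tk safe_W inv_R /=; first exact: robbers_inv_alive inv_R safe_W.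
rewrite negb_or (robbers_inv_alive inv_R safe_W) /=; apply/existsPn => c'; apply/nandP.
case: (boolP (adjr e c c')) => cc'; [right|by left].
apply/forallPn; exists (robbers_move t c' R); rewrite negb_imply robbers_move_valid /=.
apply: (IH t.+1 c' (spread (spider_pos c') W)); first by rewrite addSnnS.
  exact: safe_spread safe_W (cop_moves_spider_pos cc') (spider_pos_lt c').
by apply: robbers_inv_step inv_R; lia.
Qed.

Lemma spider_robbers_escape : 0 < num_robbers /\ ~~ capt_le e num_robbers n.
Proof.
split; first by apply/card_gt0P; exists [ffun => ord0].
apply/existsPn => c0; apply/forallPn; exists [ffun i => v (plan i (inord 0))].
apply: (@robbers_survive n 0 c0 [seq spider_pos c0 != j | j <- iota 0 7]) => //.
  by apply: (allP safe_initial); rewrite mem_iota; exact: spider_pos_lt.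
move=> j j_lt; rewrite occupied_map // => c0_j; exists [ffun => Ordinal j_lt] => i plan_i.
have plan0 : val (plan i (inord 0)) = j by rewrite plan_i ?ffunE // inordK.
by rewrite !ffunE plan0 -(spider_posE c0 j_lt) (negbTE c0_j).
Qed.
End SpiderRobbers.

Section Main.
Variables (T : finType) (e : rel T).
Hypothesis sym : symmetric e.
Hypothesis irr : irreflexive e.
Hypothesis conn : forall x y : T, connect e x y.
Hypothesis acyc : forall p : seq T, uniq p -> 3 <= size p -> ~~ cycle e p.

Lemma caterpillar_capt_bounded (x : T) : caterpillar e -> exists B, forall m, capt_le e m B.
Proof.
case=> p [p_uniq p_nonleaf p_edges].
have off_leaf w : w \notin p -> is_leaf e w by rewrite p_nonleaf negbK.
case: p p_uniq p_nonleaf p_edges off_leaf => [|h t] p_uniq p_nonleaf p_edges off_leaf.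
  have [y exy] := leaf_neighbour (off_leaf x isT).
  have all_xy := adjacent_leaves_cover sym conn exy (off_leaf x isT) (off_leaf y isT).
  exists ((size [:: x]).-1 * (2 * #|T| + 1) + 2 * #|T|) => m.
  apply: (spine_capt_bounded x sym) => //.
  - by move=> ? ?; rewrite !inE => /eqP-> /eqP->; rewrite irr /= eqxx.
  - by move=> w _; apply: off_leaf.
  - move=> w u; rewrite inE => w_x; move: (all_xy w) (all_xy u); rewrite (negbTE w_x) /= => /eqP->.
    by case/orP=> /eqP->; rewrite ?irr ?mem_head.
exists ((size (h :: t)).-1 * (2 * #|T| + 1) + 2 * #|T|) => m.
apply: (spine_capt_bounded h sym) => // w u w_notin ewu; apply: contraT => u_notin.
have := adjacent_leaves_cover sym conn ewu (off_leaf w w_notin) (off_leaf u u_notin) h.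
have := p_nonleaf h; rewrite mem_head => /esym h_nonleaf.
by case/orP=> /eqP h_eq; rewrite -h_eq mem_head in w_notin u_notin.
Qed.

Lemma fork_capt_unbounded o a b c : e o a -> e o b -> e o c -> uniq [:: a; b; c] ->
  ~~ is_leaf e a -> ~~ is_leaf e b -> ~~ is_leaf e c ->
  forall k, exists2 m, 0 < m & ~~ capt_le e m k.
Proof.
move=> eoa eob eoc abc_uniq a_nonleaf b_nonleaf c_nonleaf k.
have [a' eaa' a'_o] := nonleaf_other_neighbour (etrans (sym a o) eoa) a_nonleaf.
have [b' ebb' b'_o] := nonleaf_other_neighbour (etrans (sym b o) eob) b_nonleaf.
have [c' ecc' c'_o] := nonleaf_other_neighbour (etrans (sym c o) eoc) c_nonleaf.
have induced :=
  spider_vertex_induced sym irr acyc eoa eob eoc eaa' ebb' ecc' abc_uniq a'_o b'_o c'_o.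
have [m_gt0 escape] := spider_robbers_escape (fun i j i_lt j_lt => (induced i j i_lt j_lt).1)
                                            (fun i j i_lt j_lt => (induced i j i_lt j_lt).2) k.
by exists (num_robbers k).
Qed.
End Main.

Theorem mainTheorem13 (T : finType) (e : rel T) :
  symmetric e -> irreflexive e -> is_tree e ->
  (strong_cop_win e <-> caterpillar e).
Proof.
move=> sym irr [T_gt0 [conn acyc]]; have [x _] := card_gt0P T_gt0.
split=> [strong|cat].
  apply: (caterpillar_of_no_fork sym irr acyc conn) => o a b c eoa eob eoc abc_uniq a_nl b_nl c_nl.
  have unbounded := fork_capt_unbounded sym irr acyc eoa eob eoc abc_uniq a_nl b_nl c_nl.
  exact: not_strong_cop_win_of_unbounded unbounded strong.
have [B capt_B] := caterpillar_capt_bounded sym irr conn x cat.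
exact: strong_cop_win_of_bounded x B capt_B.
Qed.
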